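(* For all integers $n\geq0$, $$p_{R1}(n)+\sum_{j\geq1}(-1)^j\left(p_{R1}\!\left(n-\tfrac{j(5j-3)}{2}\right)+p_{R1}\!\left(n-\tfrac{j(5j+3)}{2}\right)\right)=\begin{cases}1,&\text{if } n=5\,\frac{j(3j-1)}{2}\text{ for some even } j\in\mathbb{Z},\\-1,&\text{if } n=5\,\frac{j(3j-1)}{2}\text{ for some odd } j\in\mathbb{Z},\\0,&\text{otherwise,}\end{cases}$$ (i.e. $p_{R1}(n)-p_{R1}(n-1)-p_{R1}(n-4)+p_{R1}(n-7)+p_{R1}(n-13)-\cdots$), and $$p_{R2}(n)+\sum_{j\geq1}(-1)^j\left(p_{R2}\!\left(n-\tfrac{j(3j-1)}{2}\right)+p_{R2}\!\left(n-\tfrac{j(3j+1)}{2}\right)\right)=\begin{cases}1,&\text{if } n=\frac{j(5j-3)}{2}\text{ for some even } j\in\mathbb{Z},\\-1,&\text{if } n=\frac{j(5j-3)}{2}\text{ for some odd } j\in\mathbb{Z},\\0,&\text{otherwise,}\end{cases}$$ (i.e. $p_{R2}(n)-p_{R2}(n-1)-p_{R2}(n-2)+p_{R2}(n-5)+p_{R2}(n-7)-\cdots$).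
   Context: $p_{R1}(n)$ (resp. $p_{R2}(n)$) is the number of partitions of $n$ all of whose parts are congruent to $\pm1$ (resp. $\pm2$) modulo $5$, with value $1$ at $n=0$ and $0$ at negative arguments. The numbers $j(3j-1)/2$, $j\in\mathbb{Z}$, are the generalized pentagonal numbers and $j(5j-3)/2$, $j\in\mathbb{Z}$, are the generalized heptagonal numbers; within each family they are distinct for distinct $j$. *)

From HB Require Import structures.
From mathcomp Require Import all_boot all_order all_algebra.
Set Implicit Arguments. Unset Strict Implicit. Unset Printing Implicit Defensive.
Import Order.TTheory GRing.Theory Num.Theory.

(* Number of partitions of n all of whose parts satisfy P.  A partition of n
   is encoded by its multiplicity function m : part size i |-> number of
   occurrences of i; multiplicities and part sizes are at most n, so m is a
   finite function 'I_n.+1 -> 'I_n.+1.  Parts are positive integers. *)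
Definition npart (P : pred nat) (n : nat) : nat :=
  #|[set m : {ffun 'I_n.+1 -> 'I_n.+1} |
      (\sum_(i < n.+1) i * m i == n)%N &&
      [forall i : 'I_n.+1, (m i != 0 :> nat) ==> (0 < i)%N && P i]]|.

Definition npartZ (P : pred nat) (m : int) : int :=
  if (m < 0)%R then 0%R else Posz (npart P (absz m)).

Definition R1 : pred nat := fun i => (i %% 5 == 1) || (i %% 5 == 4).
Definition R2 : pred nat := fun i => (i %% 5 == 2) || (i %% 5 == 3).

Definition pR1 (m : int) : int := npartZ R1 m.
Definition pR2 (m : int) : int := npartZ R2 m.

Local Open Scope ring_scope.
(* generalized pentagonal numbers j(3j-1)/2 and heptagonal numbers j(5j-3)/2;
   the numerators are always even, so the integer division is exact *)
Definition pent (j : int) : int := ((j * (3 * j - 1)) %/ 2)%Z.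
Definition hept (j : int) : int := ((j * (5 * j - 3)) %/ 2)%Z.

From HB Require Import structures.
From mathcomp Require Import all_boot all_order all_algebra.
From mathcomp Require Import zify ring.
Import Order.TTheory GRing.Theory Num.Theory.

(* Everything is a congruence modulo ['X^n.+1] of polynomials, i.e. an
   identity of power series read up to degree [n].  The q-binomial theorem
   applied to \prod_(k < 2N) (X^(aN) - X^b X^(ak)) gives a finite Jacobi
   triple product; multiplying by (X^a; X^a)_2N and letting N grow yields
     (q^a; q^a) (q^b; q^a) (q^(a-b); q^a)
       = theta(a, b) := \sum_(j in Z) (-1)^j q^(a j (j - 1) / 2 + b j),
   which for (a, b) = (3s, s) is Euler's pentagonal theorem in q^s.  If G_P is
   the generating function of partitions into parts in P, so that
   G_P * \prod_(i in P) (1 - q^i) = 1, this gives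
     G_R1 * theta(5,1) = G_R1 (q; q^5) (q^4; q^5) (q^5; q^5) = (q^5; q^5) = theta(15,5),
     G_R2 * theta(3,1) = G_R2 (q; q) = (q; q^5) (q^4; q^5) (q^5; q^5) = theta(5,1),
   and both statements compare the coefficients of q^n. *)

Set Implicit Arguments. Unset Strict Implicit.
Local Open Scope ring_scope.

Lemma bin2_sqr s : (2 * 'C(s, 2) + s = s * s)%N.
Proof. by case: s => // s; rewrite -mul_bin_diag bin1; lia. Qed.

Lemma bin2D m n : 'C(m + n, 2) = ('C(m, 2) + m * n + 'C(n, 2))%N.
Proof.
elim: n => [|n IHn]; first by rewrite addn0 muln0 !addn0.
by rewrite addnS binS bin1 IHn binS bin1; lia.
Qed.

Lemma sign_subn (R : pzRingType) n s : (s <= n)%N ->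
  (-1) ^+ (n - s) = (-1) ^+ n * (-1) ^+ s :> R.
Proof. by move=> le_sn; rewrite -signr_odd oddB // signr_addb !signr_odd. Qed.

Lemma sum_center (V : nmodType) (F : nat -> V) N :
  \sum_(i < (N + N).+1) F i =
  F N + \sum_(t < N) (F (N + t.+1)%N + F (N - t.+1)%N).
Proof.
transitivity (\sum_(0 <= i < (N + N).+1) F i); first by rewrite big_mkord.
rewrite (big_cat_nat _ (n := N)) //=; last lia.
rewrite [X in _ + X]big_ltn; last lia.
rewrite -(add0n N.+1) big_addn big_rev_mkord subn0 big_mkord.
have -> : ((N + N).+1 - N.+1 = N)%N by lia.
rewrite big_split /= addrCA; congr (_ + _); rewrite addrC; congr (_ + _).
by apply: eq_bigr => i _; rewrite addnS -addSn addnC.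
Qed.

Lemma modn_small_eq a u r : (0 < u <= a)%N -> (0 < r <= a)%N ->
  (u %% a == r %% a)%N = (u == r).
Proof.
move=> /andP [u_gt0 le_ua] /andP [r_gt0 le_ra].
case: (ltngtP u a) le_ua => // [lt_ua | ua] _;
  case: (ltngtP r a) le_ra => // [lt_ra | ra] _;
  subst; rewrite ?modnn ?modn_small //; apply/eqP/eqP; lia.
Qed.

Lemma dvdn_mod3 s i : (0 < s)%N ->
  (s %| i)%N = [|| 3 * s %| i, i %% (3 * s) == s | i %% (3 * s) == 3 * s - s]%N.
Proof.
move=> s_gt0; rewrite /dvdn -(modn_dvdm i (dvdn_mull 3 (dvdnn s))).
have : (i %% (3 * s) < 3 * s)%N by rewrite ltn_pmod // muln_gt0.
move: (i %% (3 * s))%N => r lt_r; have := divn_eq r s; have := ltn_pmod r s_gt0.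
have : (r %/ s < 3)%N by rewrite ltn_divLR.
by move: (r %/ s)%N (r %% s)%N => q m; case: q => [|[|[|q]]] //= _ lt_ms ->; lia.
Qed.

Section TruncatedPowerSeries.
Variable R : comNzRingType.
Implicit Types p q : {poly R}.

Definition eqmodX n p q := exists r, p - q = r * 'X^(n.+1).

Lemma eqmodX_refl n p : eqmodX n p p.
Proof. by exists 0; rewrite subrr mul0r. Qed.

Lemma eqmodX_sym n p q : eqmodX n p q -> eqmodX n q p.
Proof. by case=> r h; exists (- r); rewrite mulNr -h opprB. Qed.

Lemma eqmodX_trans n p q s : eqmodX n p q -> eqmodX n q s -> eqmodX n p s.
Proof.
by case=> r h [r' h']; exists (r + r'); rewrite mulrDl -h -h' addrA subrK.
Qed.

Lemma eqmodXD n p q p' q' :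
  eqmodX n p p' -> eqmodX n q q' -> eqmodX n (p + q) (p' + q').
Proof. by case=> r h [r' h']; exists (r + r'); rewrite mulrDl -h -h'; ring. Qed.

Lemma eqmodXN n p q : eqmodX n p q -> eqmodX n (- p) (- q).
Proof. by case=> r h; exists (- r); rewrite mulNr -h; ring. Qed.

Lemma eqmodXM n p q p' q' :
  eqmodX n p p' -> eqmodX n q q' -> eqmodX n (p * q) (p' * q').
Proof.
case=> r h [r' h']; exists (r * q + p' * r').
have -> : p * q - p' * q' = (p - p') * q + p' * (q - q') by ring.
by rewrite h h'; ring.
Qed.

Lemma eqmodXMl n p q q' : eqmodX n q q' -> eqmodX n (p * q) (p * q').
Proof. exact/eqmodXM/eqmodX_refl. Qed.

Lemma eqmodXMr n p p' q : eqmodX n p p' -> eqmodX n (p * q) (p' * q).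
Proof. by move/eqmodXM; apply; apply: eqmodX_refl. Qed.

Lemma eqmodX_sum n (I : Type) (r : seq I) (P : pred I) (F G : I -> {poly R}) :
  (forall i, P i -> eqmodX n (F i) (G i)) ->
  eqmodX n (\sum_(i <- r | P i) F i) (\sum_(i <- r | P i) G i).
Proof.
move=> FG; apply: (big_ind2 (eqmodX n)) => //; first exact: eqmodX_refl.
by move=> *; apply: eqmodXD.
Qed.

Lemma eqmodX_prod1 n (I : Type) (r : seq I) (P : pred I) (F : I -> {poly R}) :
  (forall i, P i -> eqmodX n (F i) 1) -> eqmodX n (\prod_(i <- r | P i) F i) 1.
Proof.
move=> F1; apply: (big_ind (eqmodX n ^~ 1)) => //; first exact: eqmodX_refl.
by move=> p q p1 q1; rewrite -(mulr1 1); apply: eqmodXM.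
Qed.

Lemma eqmodX_leq m n p q : (m <= n)%N -> eqmodX n p q -> eqmodX m p q.
Proof.
move=> le_mn [r h]; exists (r * 'X^(n - m)); rewrite h -mulrA -exprD.
by congr (_ * 'X^_); lia.
Qed.

Lemma eqmodX_coef n p q i : eqmodX n p q -> (i <= n)%N -> p`_i = q`_i.
Proof.
case=> r h le_in; apply/eqP; rewrite -subr_eq0 -coefB h coefMXn.
by have -> : (i < n.+1)%N by lia.
Qed.

Lemma eqmodX_Xn0 n k p : (n < k)%N -> eqmodX n ('X^k * p) 0.
Proof.
move=> lt_nk; exists (p * 'X^(k - n.+1)); rewrite subr0 -mulrA -exprD mulrC.
by congr (_ * 'X^_); lia.
Qed.

Lemma eqmodX_subX n k : (n < k)%N -> eqmodX n (1 - 'X^k) 1.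
Proof.
move=> lt_nk; rewrite -[X in eqmodX _ _ X]subr0.
apply/eqmodXD/eqmodXN; first exact: eqmodX_refl.
by rewrite -[X in eqmodX _ X _]mulr1; apply: eqmodX_Xn0.
Qed.

Lemma eqmodX_geom n e : (0 < e)%N ->
  eqmodX n ((1 - 'X^e) * \sum_(j < n.+1) 'X^(e * j)) 1.
Proof.
move=> e_gt0.
have -> : (1 - 'X^e) * \sum_(j < n.+1) 'X^(e * j) = 1 - 'X^(e * n.+1) :> {poly R}.
  elim: n => [|n IHn]; first by rewrite big_ord1 muln0 expr0 mulr1 muln1.
  rewrite big_ord_recr /= mulrDr IHn mulrBl mul1r -exprD.
  have -> : (e + e * n.+1 = e * n.+2)%N by lia.
  ring.
by apply: eqmodX_subX; rewrite (leq_trans _ (leq_pmull _ e_gt0)).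

Qed.

Lemma eqmodX_prod_tail (P : pred nat) (F : nat -> {poly R}) n M : (n < M)%N ->
  (forall i, (n < i)%N -> P i -> eqmodX n (F i) 1) ->
  eqmodX n (\prod_(0 <= i < M | P i) F i) (\prod_(0 <= i < n.+1 | P i) F i).
Proof.
move=> lt_nM F1; rewrite (big_cat_nat _ (n := n.+1)) //=.
rewrite -[X in eqmodX _ _ X]mulr1; apply: eqmodXMl.
rewrite big_nat_cond; apply: eqmodX_prod1 => i /andP [/andP [lt_ni _] Pi].
exact: F1.
Qed.

Lemma eqmodX_inv_uniq n d g g' :
  eqmodX n (d * g) 1 -> eqmodX n (d * g') 1 -> eqmodX n g g'.
Proof.
move=> dg1 dg'1; rewrite -[g]mulr1 -[g']mul1r.
apply: (eqmodX_trans (q := g * (d * g'))); first exact/eqmodXMl/eqmodX_sym.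
by rewrite mulrA [g * d]mulrC; apply: eqmodXMr.
Qed.

End TruncatedPowerSeries.

Section GaussianBinomial.
Variable R : comPzRingType.
Implicit Types t x y : R.

Fixpoint qbinom x n k : R :=
  match n, k with
  | _, 0 => 1
  | 0, _.+1 => 0
  | n'.+1, k'.+1 => qbinom x n' k' + x ^+ k'.+1 * qbinom x n' k'.+1
  end.

Lemma qbinom0 x n : qbinom x n 0 = 1.
Proof. by case: n. Qed.

Lemma qbinom_small x n k : (n < k)%N -> qbinom x n k = 0.
Proof.
elim: n k => [|n IHn] [|k] //= lt_nk.
by rewrite !IHn ?mulr0 ?addr0 //; lia.
Qed.

Lemma qbinomial_theorem t x y n :
  \prod_(k < n) (t + y * x ^+ k) =
  \sum_(i < n.+1) x ^+ 'C(i, 2) * qbinom x n i * y ^+ i * t ^+ (n - i).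
Proof.
elim: n y => [|n IHn] y; first by rewrite big_ord0 big_ord1 /= !expr0 !mulr1.
rewrite big_ord_recl /=.
under eq_bigr => k _ do rewrite /bump /= add1n exprS mulrA.
rewrite IHn mulrDl [in RHS]big_ord_recl /= subn0 !expr0 !mulr1 mul1r.
under [in RHS]eq_bigr => i _ do rewrite /bump /= add1n mulrDr !mulrDl.
rewrite big_split /= !big_distrr /= [LHS]addrC [RHS]addrCA; congr (_ + _).
  apply: eq_bigr => i _; rewrite add0n subSS binS bin1 exprD exprMn exprS; ring.
rewrite big_ord_recl /= subn0 !expr0 !mulr1 qbinom0 !mul1r -exprS; congr (_ + _).
rewrite [in RHS]big_ord_recr /= add0n qbinom_small // !mulr0 !mul0r addr0.
apply: eq_bigr => i _; rewrite /bump /= !add0n !add1n subSS.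
have -> : (n - i = (n - i.+1).+1)%N by have := ltn_ord i; lia.
by rewrite [t ^+ (n - i.+1).+1]exprS exprMn; ring.
Qed.

Definition qpoch x K : R := \prod_(k < K) (1 - x ^+ k.+1).

Lemma qpochS x K : qpoch x K.+1 = qpoch x K * (1 - x ^+ K.+1).
Proof. by rewrite /qpoch big_ord_recr. Qed.

Lemma qpoch_qbinom x n k : (k <= n)%N ->
  qpoch x k * qpoch x (n - k) * qbinom x n k = qpoch x n.
Proof.
elim: n k => [|n IHn] [|k] //= le_kn.
- by rewrite /qpoch !big_ord0 !mulr1.
- by rewrite /qpoch big_ord0 subn0 mul1r mulr1.
rewrite subSS mulrDr.
have -> : qpoch x k.+1 * qpoch x (n - k) * qbinom x n k = (1 - x ^+ k.+1) * qpoch x n.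
  by rewrite -(IHn k) ?qpochS; [ring | lia].
case: (ltnP k n) => [lt_kn | le_nk]; last first.
  have -> : k = n by lia.
  by rewrite qbinom_small // !mulr0 addr0 qpochS mulrC.
have -> : qpoch x k.+1 * qpoch x (n - k) * (x ^+ k.+1 * qbinom x n k.+1) =
          x ^+ k.+1 * (1 - x ^+ (n - k)) * qpoch x n.
  have -> : (n - k = (n - k.+1).+1)%N by lia.
  by rewrite -(IHn k.+1 lt_kn) [qpoch x (n - k.+1).+1]qpochS; ring.
rewrite qpochS mulrBr mulr1 -exprD.
have -> : (k.+1 + (n - k) = n.+1)%N by lia.
ring.
Qed.

End GaussianBinomial.

(* Exponents of the theta series \sum_(j in Z) (-1)^j X^(a j (j - 1) / 2 + b j):
   [jtp_exp_pos a b s] at [j = s] and [jtp_exp_neg a b s] at [j = -s]. *)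
Definition jtp_exp_pos a b s := (a * 'C(s, 2) + b * s)%N.
Definition jtp_exp_neg a b s := (a * 'C(s.+1, 2) - b * s)%N.

Definition jtp_exp a b (j : int) : nat :=
  match j with Posz s => jtp_exp_pos a b s | Negz s => jtp_exp_neg a b s.+1 end.

Lemma jtp_exp_pos_ge a b s : (0 < b)%N -> (s <= jtp_exp_pos a b s)%N.
Proof.
by move=> b_gt0; rewrite /jtp_exp_pos (leq_trans (leq_pmull s b_gt0)) ?leq_addl.
Qed.

Lemma jtp_exp_neg_ge a b s : (b < a)%N -> (s <= jtp_exp_neg a b s)%N.
Proof.
move=> lt_ba; rewrite /jtp_exp_neg binS bin1 mulnDr.
have : ((b + 1) * s <= a * s)%N by rewrite leq_mul2r; lia.
lia.
Qed.

Lemma jtp_exp_double a b j : (b <= a)%N ->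
  2 * (jtp_exp a b j)%:Z = j * (a%:Z * j - a%:Z + 2 * b%:Z).
Proof.
move=> le_ba; case: j => s /=; rewrite ?NegzE.
  have := congr1 (muln a) (bin2_sqr s); rewrite /jtp_exp_pos; lia.
have := congr1 (muln a) (bin2_sqr s.+1); rewrite /jtp_exp_neg !binS !bin1 bin0.
have : (b * s.+1 <= a * s.+1)%N by rewrite leq_mul2r le_ba orbT.
lia.
Qed.

(* [jtp_exp a b j = jtp_exp a b k] with [j != k] forces
   [a (j + k - 1) = - 2 b], impossible for [0 < b < a] unless [a = 2 b]. *)
Lemma jtp_exp_inj a b : (0 < b)%N -> (b < a)%N -> a != (2 * b)%N ->
  injective (jtp_exp a b).
Proof.
move=> b_gt0 lt_ba /eqP neq_a2b j k /(congr1 (fun e : nat => 2 * e%:Z)).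
rewrite !jtp_exp_double ?(ltnW lt_ba) // => /eqP; rewrite -subr_eq0.
have -> : j * (a%:Z * j - a%:Z + 2 * b%:Z) - k * (a%:Z * k - a%:Z + 2 * b%:Z) =
          (j - k) * (a%:Z * (j + k - 1) + 2 * b%:Z) by ring.
rewrite mulf_eq0 subr_eq0 => /orP [/eqP // | /eqP].
set m := j + k - 1 => eq0; exfalso.
have [m_le | [m_eq | m_ge]] : m <= -2 \/ m = -1 \/ 0 <= m by lia.
- have : a%:Z * m <= a%:Z * -2 by rewrite ler_pM2l //; lia.
  lia.
- by rewrite m_eq in eq0; lia.
- have : 0 <= a%:Z * m by rewrite mulr_ge0.
  lia.
Qed.

Section JacobiTripleProduct.
Variable R : comNzRingType.
Implicit Types a b n N : nat.

Lemma qpochXn_trunc a n K K' : (0 < a)%N -> (n <= K <= K')%N ->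
  eqmodX n (qpoch ('X^a : {poly R}) K') (qpoch 'X^a K).
Proof.
move=> a_gt0 /andP [le_nK /subnK <-]; elim: (K' - K)%N => [|d IHd].
  exact: eqmodX_refl.
rewrite addSn qpochS -[X in eqmodX _ _ X]mulr1; apply: eqmodXM => //.
rewrite -exprM; apply: eqmodX_subX.
by rewrite (leq_trans _ (leq_pmull _ a_gt0)) //; lia.
Qed.

Lemma qpochXn_invertible a n K : (0 < a)%N ->
  exists g, eqmodX n (qpoch ('X^a : {poly R}) K * g) 1.
Proof.
move=> a_gt0; exists (\prod_(k < K) \sum_(j < n.+1) 'X^((a * k.+1) * j)).
rewrite /qpoch -big_split /=; apply: eqmodX_prod1 => k _.
by rewrite -exprM; apply: eqmodX_geom; rewrite muln_gt0 a_gt0.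
Qed.

(* [qbinom x M i] is [qpoch x M / (qpoch x i * qpoch x (M - i))], and modulo
   ['X^n.+1] both factors of the denominator agree with [qpoch x M]. *)
Lemma qpoch_qbinom_central a n M i : (0 < a)%N -> (n <= i)%N -> (i + n <= M)%N ->
  eqmodX n (qpoch ('X^a : {poly R}) M * qbinom 'X^a M i) 1.
Proof.
move=> a_gt0 le_ni le_iM; set Q := qpoch ('X^a : {poly R}).
have [g Qg1] := qpochXn_invertible n M a_gt0.
have QiM : eqmodX n (Q i) (Q M).
  by apply/eqmodX_sym/qpochXn_trunc => //; lia.
have QMiM : eqmodX n (Q (M - i)%N) (Q M).
  by apply/eqmodX_sym/qpochXn_trunc => //; lia.
apply: (eqmodX_trans (q := Q M * qbinom 'X^a M i * (Q M * g))).
  by rewrite -[X in eqmodX _ X _]mulr1; apply/eqmodXMl/eqmodX_sym.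
apply: (eqmodX_trans (q := Q i * Q (M - i)%N * qbinom 'X^a M i * g)); last first.
  by rewrite qpoch_qbinom //; lia.
have -> : Q M * qbinom 'X^a M i * (Q M * g) = Q M * Q M * qbinom 'X^a M i * g.
  by ring.
by do 2!apply: eqmodXMr; apply: eqmodXM; apply: eqmodX_sym.
Qed.

Definition jtp_prod a b N : {poly R} :=
  \prod_(l < N) (1 - 'X^(a * l + b)) * \prod_(l < N) (1 - 'X^(a * l + (a - b))).

Definition theta a b M : {poly R} :=
  1 + \sum_(t < M) (-1) ^+ t.+1 *
        ('X^(jtp_exp_pos a b t.+1) + 'X^(jtp_exp_neg a b t.+1)).

Definition jtp_term_exp a b N i := (a * 'C(i, 2) + b * i + a * (N * (N + N - i)))%N.

Lemma prod_jtp_rev a b N : (b < a)%N ->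
  \prod_(k < N) (1 - 'X^(a * (N - k) - b)) =
  \prod_(l < N) (1 - 'X^(a * l + (a - b))) :> {poly R}.
Proof.
move=> lt_ba.
transitivity (\prod_(0 <= l < N) (1 - 'X^(a * l + (a - b))) : {poly R});
  last by rewrite big_mkord.
rewrite big_rev_mkord subn0; apply: eq_bigr => [[k /= lt_kN]] _; congr (1 - 'X^_).
have [u ->] : exists u, N = (k.+1 + u)%N by exists (N - k.+1)%N; lia.
have -> : (k.+1 + u - k = u.+1)%N by lia.
have -> : (k.+1 + u - k.+1 = u)%N by lia.
by rewrite mulnS; lia.
Qed.

(* The product of the q-binomial theorem for [t = 'X^(a * N)],
   [x = 'X^a], [y = - 'X^b] and [2 N] factors: the first [N] factors give
   the second half of [jtp_prod], the last [N] its first half. *)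
Lemma prod_jtp_shift a b N : (0 < b)%N -> (b < a)%N ->
  \prod_(k < N + N) ('X^a ^+ N + (- 'X^b) * 'X^a ^+ k) =
  (-1) ^+ N * 'X^(jtp_term_exp a b N N) * jtp_prod a b N.
Proof.
move=> b_gt0 lt_ba; rewrite /jtp_term_exp addnK big_split_ord /=.
have -> : \prod_(k < N) ('X^a ^+ N + - 'X^b * 'X^a ^+ (lshift N k)) =
   \prod_(k < N) ('X^(a * k) * (- 'X^b) * (1 - 'X^(a * (N - k) - b))) :> {poly R}.
  apply: eq_bigr => [[k /= lt_kN]] _; rewrite -!exprM.
  have -> : 'X^(a * N) = 'X^(a * k) * 'X^b * 'X^(a * (N - k) - b) :> {poly R}.
    rewrite -!exprD; congr 'X^_.
    have : (a <= a * (N - k))%N by rewrite leq_pmulr //; lia.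
    have : (a * k + a * (N - k) = a * N)%N by rewrite -mulnDr; congr (_ * _); lia.
    lia.
  ring.
have -> : \prod_(k < N) ('X^a ^+ N + - 'X^b * 'X^a ^+ (rshift N k)) =
   \prod_(k < N) ('X^(a * N) * (1 - 'X^(a * k + b))) :> {poly R}.
  by apply: eq_bigr => k _ /=; rewrite -!exprM mulnDr !exprD; ring.
rewrite !big_split /= prodrXr !prodr_const !card_ord -(big_mkord xpredT).
rewrite -big_distrr /= bin2_sum prod_jtp_rev // /jtp_prod.
rewrite (exprNn 'X^b) -exprM -(exprM 'X b N) -mulnA !exprD.
ring.
Qed.

Lemma jtp_term_exp_addn a b N s : (s <= N)%N ->
  jtp_term_exp a b N (N + s) = (jtp_term_exp a b N N + jtp_exp_pos a b s)%N.
Proof.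
move=> le_sN; rewrite /jtp_term_exp /jtp_exp_pos bin2D addnK.
have [u ->] : exists u, N = (s + u)%N by exists (N - s)%N; lia.
have -> : (s + u + (s + u) - (s + u + s) = u)%N by lia.
lia.
Qed.

Lemma jtp_term_exp_subn a b N s : (0 < s <= N)%N -> (b <= a)%N ->
  jtp_term_exp a b N (N - s) = (jtp_term_exp a b N N + jtp_exp_neg a b s)%N.
Proof.
move=> /andP [s_gt0 le_sN] le_ba; rewrite /jtp_term_exp /jtp_exp_neg addnK.
have : (b * s <= a * s)%N by rewrite leq_mul2r le_ba orbT.
have : (a * (2 * 'C(s.+1, 2)) = a * (s.+1 * s))%N.
  by rewrite -mul_bin_diag bin1.
have [u ->] : exists u, N = (s + u)%N by exists (N - s)%N; lia.
have -> : (s + u - s = u)%N by lia.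
have -> : (s + u + (s + u) - u = s + u + s)%N by lia.
rewrite bin2D binS bin1; have := bin2_sqr s.
lia.
Qed.

Lemma jtp_finite a b N : (0 < b)%N -> (b < a)%N ->
  jtp_prod a b N = qbinom 'X^a (N + N) N + \sum_(t < N) (-1) ^+ t.+1 *
    ('X^(jtp_exp_pos a b t.+1) * qbinom 'X^a (N + N) (N + t.+1) +
     'X^(jtp_exp_neg a b t.+1) * qbinom 'X^a (N + N) (N - t.+1)).
Proof.
move=> b_gt0 lt_ba; set K := jtp_term_exp a b N N.
have lreg_c : GRing.lreg ((-1) ^+ N * 'X^K : {poly R}).
  exact/lregM/monic_lreg/monicXn/lreg_sign.
apply: lreg_c; rewrite -prod_jtp_shift // qbinomial_theorem.
have termE i : 'X^a ^+ 'C(i, 2) * qbinom 'X^a (N + N) i * (- 'X^b) ^+ i *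
      ('X^a ^+ N) ^+ (N + N - i) =
    (-1) ^+ i * 'X^(jtp_term_exp a b N i) * qbinom 'X^a (N + N) i :> {poly R}.
  by rewrite /jtp_term_exp -!exprM (exprNn 'X^b) -(exprM 'X b i) !mulnA !exprD; ring.
under eq_bigr => i _ do rewrite termE.
rewrite (sum_center (fun i =>
  (-1) ^+ i * 'X^(jtp_term_exp a b N i) * qbinom 'X^a (N + N) i)).
rewrite mulrDr big_distrr /=; congr (_ + _).
apply: eq_bigr => [[t /= lt_tN]] _.
rewrite jtp_term_exp_addn // jtp_term_exp_subn ?ltn0Sn //= -/K; last lia.
by rewrite !(exprD 'X K) (exprD (-1) N) sign_subn //; ring.
Qed.

Lemma qpoch_jtp_eqmodX a b n N : (0 < b)%N -> (b < a)%N -> (n + n <= N)%N ->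
  eqmodX n (qpoch 'X^a (N + N) * jtp_prod a b N) (theta a b N).
Proof.
move=> b_gt0 lt_ba le_nN; have a_gt0 : (0 < a)%N by lia.
set Q := qpoch ('X^a : {poly R}) (N + N).
rewrite jtp_finite // mulrDr big_distrr /=; apply: eqmodXD.
  by apply: qpoch_qbinom_central => //; lia.
apply: eqmodX_sum => t _.
set qb := qbinom 'X^a (N + N); set ep := jtp_exp_pos a b t.+1.
set em := jtp_exp_neg a b t.+1.
have -> : Q * ((-1) ^+ t.+1 * ('X^ep * qb (N + t.+1)%N + 'X^em * qb (N - t.+1)%N))
  = (-1) ^+ t.+1 * ('X^ep * (Q * qb (N + t.+1)%N) + 'X^em * (Q * qb (N - t.+1)%N)).
  by ring.
apply: eqmodXMl.
have Xn_mul e g : (n < e)%N \/ eqmodX n g 1 -> eqmodX n ('X^e * g) 'X^e.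
  case=> [lt_ne | g1]; last by rewrite -[X in eqmodX _ _ X]mulr1; apply: eqmodXMl.
  apply: (eqmodX_trans (eqmodX_Xn0 _ lt_ne)).
  by rewrite -['X^e]mulr1; apply/eqmodX_sym/eqmodX_Xn0.
have := jtp_exp_pos_ge a t.+1 b_gt0; have := jtp_exp_neg_ge t.+1 lt_ba.
case: (leqP t.+1 n) => le_tn ge_neg ge_pos.
  by apply: eqmodXD; apply: Xn_mul; right; apply: qpoch_qbinom_central => //; lia.
by apply: eqmodXD; apply: Xn_mul; left; lia.
Qed.

Lemma theta_trunc a b n M : (0 < b)%N -> (b < a)%N -> (n < M)%N ->
  eqmodX n (theta a b M) (theta a b n.+1).
Proof.
move=> b_gt0 lt_ba lt_nM; apply: eqmodXD; first exact: eqmodX_refl.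
set F := fun t => (-1) ^+ t.+1 *
  ('X^(jtp_exp_pos a b t.+1) + 'X^(jtp_exp_neg a b t.+1)) : {poly R}.
rewrite -!(big_mkord xpredT F) (big_cat_nat _ (n := n.+1)) //=.
rewrite -[X in eqmodX _ _ X]addr0; apply: eqmodXD; first exact: eqmodX_refl.
apply: (eqmodX_trans (q := \sum_(n.+1 <= t < M) (0 : {poly R}))); last first.
  by rewrite big1_eq; apply: eqmodX_refl.
rewrite big_nat_cond [X in eqmodX _ _ X]big_nat_cond; apply: eqmodX_sum.
move=> t /andP [/andP [lt_nt _] _]; rewrite -(mulr0 ((-1) ^+ t.+1)).
apply/eqmodXMl; rewrite -(addr0 0).
apply: eqmodXD; rewrite -['X^_]mulr1; apply: eqmodX_Xn0.
  by have := jtp_exp_pos_ge a t.+1 b_gt0; lia.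
by have := jtp_exp_neg_ge t.+1 lt_ba; lia.
Qed.

Lemma jacobi_triple_product_eqmodX a b n N :
  (0 < b)%N -> (b < a)%N -> (n + n < N)%N ->
  eqmodX n (qpoch 'X^a (N + N) * jtp_prod a b N) (theta a b n.+1).
Proof.
move=> b_gt0 lt_ba lt_nN; apply: (eqmodX_trans (q := theta a b N)).
  by apply: qpoch_jtp_eqmodX => //; lia.
by apply: theta_trunc => //; lia.
Qed.

End JacobiTripleProduct.

Arguments jtp_prod {R}.
Arguments theta {R}.

Section PartitionProducts.
Variable R : comNzRingType.
Implicit Types (P Q : pred nat) (a b n N M : nat).

Definition part_den P M : {poly R} :=
  \prod_(0 <= i < M | (0 < i)%N && P i) (1 - 'X^i).

Lemma part_den_tail P n M : (n < M)%N ->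
  eqmodX n (part_den P M) (part_den P n.+1).
Proof.
by move=> lt_nM; apply: eqmodX_prod_tail => // i lt_ni _; apply: eqmodX_subX.
Qed.

Lemma eq_part_den P Q M : {in [pred i | 0 < i]%N, P =1 Q} ->
  part_den P M = part_den Q M.
Proof.
move=> PQ; apply: eq_bigl => i; case: (posnP i) => [-> //| i_gt0].
by rewrite /= PQ.
Qed.

Lemma part_denU P Q M : (forall i, P i -> ~~ Q i) ->
  part_den P M * part_den Q M = part_den (predU P Q) M.
Proof.
move=> PnQ; rewrite /part_den [RHS](bigID P) /=; congr (_ * _); apply: eq_bigl => i.
  by case: (P i); rewrite ?andbT ?andbF.
by case: (boolP (P i)) => [/PnQ/negbTE -> | _]; rewrite ?andbF ?andbT.
Qed.

Lemma prod_arith_part_den a r N : (0 < r <= a)%N ->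
  \prod_(l < N) (1 - 'X^(a * l + r)) =
  part_den (fun i => i %% a == r %% a)%N (a * N + 1).
Proof.
move=> r_range; elim: N => [|N IHN].
  by rewrite big_ord0 muln0 add0n /part_den big_mkcond big_nat1.
rewrite big_ord_recr /= IHN /part_den [RHS](big_cat_nat _ (n := a * N + 1)) //=;
  last by rewrite mulnS; lia.
congr (_ * _); rewrite big_nat_cond (eq_bigl (pred1 (a * N + r)%N)).
  by rewrite big_nat1_eq ifT // mulnS; lia.
move=> i /=; case: (boolP (a * N + 1 <= i < a * N.+1 + 1)%N) => [i_in | i_out].
  have [d -> d_range] : exists2 d, i = (a * N + d)%N & (0 < d <= a)%N.
    by exists (i - a * N)%N; rewrite mulnS in i_in; lia.
  by rewrite (mulnC a N) modnMDl modn_small_eq // eqn_add2l andbC; lia.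
by apply/esym/eqP => i_eq; move: i_out; rewrite i_eq mulnS; lia.
Qed.

Lemma prod_arith_eqmodX a r n N : (0 < r <= a)%N -> (n < N)%N ->
  eqmodX n (\prod_(l < N) (1 - 'X^(a * l + r)))
           (part_den (fun i => i %% a == r %% a)%N n.+1).
Proof.
move=> r_range lt_nN; rewrite prod_arith_part_den //; apply: part_den_tail.
by rewrite addn1 ltnS (leq_trans (ltnW lt_nN)) // leq_pmull //; lia.
Qed.

Lemma qpochXn_part_den a n K : (0 < a)%N -> (n < K)%N ->
  eqmodX n (qpoch 'X^a K) (part_den (dvdn a) n.+1).
Proof.
move=> a_gt0 lt_nK.
have -> : qpoch 'X^a K = \prod_(l < K) (1 - 'X^(a * l + a)) :> {poly R}.
  by apply: eq_bigr => l _; rewrite -exprM mulnSr.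
rewrite (@eq_part_den _ (fun i => i %% a == a %% a)%N); last by move=> i; rewrite modnn.
by apply: prod_arith_eqmodX; rewrite ?a_gt0 ?leqnn.
Qed.

Lemma jtp_prod_part_den a b n N : (0 < b)%N -> (b < a)%N -> (n < N)%N ->
  eqmodX n (jtp_prod a b N) (part_den (fun i => i %% a == b)%N n.+1 *
                             part_den (fun i => i %% a == a - b)%N n.+1).
Proof.
move=> b_gt0 lt_ba lt_nN; apply: eqmodXM.
  by rewrite -{2}(modn_small lt_ba); apply: prod_arith_eqmodX => //; lia.
rewrite -{2}(@modn_small (a - b) a); last lia.
by apply: prod_arith_eqmodX => //; lia.
Qed.

Lemma theta_part_den a b n : (0 < b)%N -> (b < a)%N ->
  eqmodX n (theta a b n.+1)
    (part_den (dvdn a) n.+1 * (part_den (fun i => i %% a == b)%N n.+1 *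
                               part_den (fun i => i %% a == a - b)%N n.+1)).
Proof.
move=> b_gt0 lt_ba; set N := (n + n).+1.
apply: (eqmodX_trans (q := qpoch 'X^a (N + N) * jtp_prod a b N)).
  by apply/eqmodX_sym/jacobi_triple_product_eqmodX.
by apply: eqmodXM; [apply: qpochXn_part_den | apply: jtp_prod_part_den]; lia.
Qed.

Lemma euler_pentagonal_eqmodX s n : (0 < s)%N ->
  eqmodX n (theta (3 * s) s n.+1) (part_den (dvdn s) n.+1).
Proof.
move=> s_gt0; rewrite (@eq_part_den _ (predU (dvdn (3 * s))
  (predU (fun i => i %% (3 * s) == s) (fun i => i %% (3 * s) == 3 * s - s))))%N;
  last by move=> i _; rewrite /= dvdn_mod3.
rewrite -!part_denU; first by apply: theta_part_den; lia.
- by move=> i /eqP ->; lia.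
by move=> i /=; rewrite /dvdn => /eqP ->; lia.
Qed.

End PartitionProducts.

Arguments part_den {R}.

Lemma prodr_ifXn (R : comNzRingType) (I : finType) (c : pred I) (e : I -> nat) :
  \prod_(i : I) (if c i then 'X^(e i) else 0) =
  if [forall i, c i] then 'X^(\sum_(i : I) e i) else 0 :> {poly R}.
Proof.
case: (boolP [forall i, c i]) => [/forallP c_all | ].
  by rewrite -prodrXr; apply: eq_bigr => i _; rewrite c_all.
by rewrite negb_forall => /existsP [i nci]; rewrite (bigD1 i) //= (negbTE nci) mul0r.
Qed.

(* The factor for the part size [i] is [1 + X^i + ... + X^(i n)] if [i] is an
   allowed part and [1] otherwise; expanding the product, the monomials are
   indexed by the multiplicity functions [{ffun 'I_n.+1 -> 'I_n.+1}] that
   encode partitions in [npart]. *)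
Definition part_gen (P : pred nat) n : {poly int} :=
  \prod_(i < n.+1) \sum_(j < n.+1)
     (if (j == 0 :> nat) || (0 < i)%N && P i then 'X^(i * j) else 0).

Lemma coef_part_gen_npart P n : (part_gen P n)`_n = (npart P n)%:Z.
Proof.
rewrite /part_gen bigA_distr_bigA /= coef_sum /npart -sum1_card -natz natr_sum.
rewrite [RHS]big_mkcond /=; apply: eq_bigr => m _.
rewrite prodr_ifXn inE; case: (boolP [forall i, _]) => /forallP m_ok.
  have -> : [forall i, (m i != 0 :> nat) ==> (0 < i)%N && P i].
    apply/forallP => i; apply/implyP => mi_nz.
    by move: (m_ok i); rewrite (negbTE mi_nz).
  by rewrite coefXn andbT eq_sym; case: (_ == _).
have -> : [forall i, (m i != 0 :> nat) ==> (0 < i)%N && P i] = false.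
  apply/negbTE/forallP => m_ok'; apply: m_ok => i; move: (m_ok' i).
  by case: (m i == 0 :> nat) => //= /implyP; apply.
by rewrite coef0 andbF.
Qed.

Lemma part_den_gen P n : eqmodX n (part_den P n.+1 * part_gen P n) 1.
Proof.
rewrite /part_den big_mkord big_mkcond /part_gen -big_split /=.
apply: eqmodX_prod1 => i _; case: (boolP ((0 < i)%N && P i)) => [ok | _].
  by under eq_bigr => j _ do rewrite orbT; apply: eqmodX_geom; case/andP: ok.
rewrite mul1r big_ord_recl /= muln0 expr0 big1 ?addr0 //; exact: eqmodX_refl.
Qed.

Lemma coef_part_gen P n k : (k <= n)%N -> (part_gen P n)`_k = (npart P k)%:Z.
Proof.
move=> le_kn; rewrite -coef_part_gen_npart; apply: (@eqmodX_coef _ k) => //.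
apply: (@eqmodX_inv_uniq _ _ (part_den P k.+1)); last exact: part_den_gen.
apply: (eqmodX_trans (q := part_den P n.+1 * part_gen P n)).
  by apply/eqmodXMr/eqmodX_sym/part_den_tail.
exact: eqmodX_leq le_kn (part_den_gen P n).
Qed.

Lemma part_gen_cancel P n q :
  eqmodX n (part_gen P n * (part_den P n.+1 * q)) q.
Proof.
rewrite mulrA [_ * part_den _ _]mulrC -[X in eqmodX _ _ X]mul1r.
exact/eqmodXMr/part_den_gen.
Qed.

Lemma theta51_part_den {R : comNzRingType} n :
  eqmodX n (theta 5 1 n.+1)
    (part_den (dvdn 5) n.+1 * part_den R1 n.+1 : {poly R}).
Proof.
rewrite (@eq_part_den _ R1
  (predU (fun i => i %% 5 == 1) (fun i => i %% 5 == 5 - 1))%N) //.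
by rewrite -part_denU; [apply: theta_part_den | move=> i /eqP ->].
Qed.

Lemma part_gen_theta51 n :
  eqmodX n (part_gen R1 n * theta 5 1 n.+1) (theta 15 5 n.+1).
Proof.
apply: (eqmodX_trans (q := part_den (dvdn 5) n.+1)); last first.
  exact/eqmodX_sym/(@euler_pentagonal_eqmodX _ 5).
apply: (eqmodX_trans (eqmodXMl (part_gen R1 n) (theta51_part_den n))).
by rewrite [_ * part_den R1 _]mulrC; apply: part_gen_cancel.
Qed.

Lemma part_gen_theta31 n :
  eqmodX n (part_gen R2 n * theta 3 1 n.+1) (theta 5 1 n.+1).
Proof.
have all_res : part_den (dvdn 1) n.+1 =
    part_den R2 n.+1 * (part_den (dvdn 5) n.+1 * part_den R1 n.+1) :> {poly int}.
  have mod5_lt i : (i %% 5 < 5)%N by rewrite ltn_pmod.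
  rewrite !part_denU; last 2 first.
  - move=> i; rewrite /= /dvdn /R1 /R2.
    by case: (i %% 5)%N (mod5_lt i) => [|[|[|[|[|k]]]]].
  - by move=> i; rewrite /dvdn /R1; case: (i %% 5)%N (mod5_lt i) => [|[|[|[|[|k]]]]].
  apply: eq_part_den => i _; rewrite /= /dvdn /R1 /R2 modn1.
  by case: (i %% 5)%N (mod5_lt i) => [|[|[|[|[|k]]]]].
apply: (eqmodX_trans (q := part_gen R2 n * part_den (dvdn 1) n.+1)).
  exact/eqmodXMl/(@euler_pentagonal_eqmodX _ 1).
rewrite all_res; apply: (eqmodX_trans (part_gen_cancel _ _ _)).
exact/eqmodX_sym/theta51_part_den.
Qed.

Lemma coef_sign (R : nzRingType) k (p : {poly R}) i :
  ((-1) ^+ k * p)`_i = (-1) ^+ k * p`_i.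
Proof. by rewrite -(rmorph_sign polyC) coefCM. Qed.

Lemma coef_part_gen_Xn P n e :
  (part_gen P n * 'X^e)`_n = npartZ P (n%:Z - e%:Z).
Proof.
rewrite coefMXn /npartZ; case: (ltnP n e) => [lt_ne | le_en].
  by have -> : (n%:Z - e%:Z < 0) = true by apply/idP; lia.
have -> : (n%:Z - e%:Z < 0) = false by apply/negbTE; rewrite -leNgt; lia.
have -> : `|n%:Z - e%:Z|%N = (n - e)%N by lia.
by rewrite coef_part_gen ?leq_subr.
Qed.

Lemma coef_part_gen_theta P a b M n : (part_gen P n * theta a b M)`_n =
  npartZ P n%:Z + \sum_(t < M) (-1) ^+ t.+1 *
    (npartZ P (n%:Z - (jtp_exp_pos a b t.+1)%:Z) +
     npartZ P (n%:Z - (jtp_exp_neg a b t.+1)%:Z)).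
Proof.
rewrite /theta mulrDr mulr1 coefD big_distrr coef_sum /=.
congr (_ + _); first by rewrite /npartZ /= coef_part_gen.
apply: eq_bigr => t _.
by rewrite mulrCA coef_sign mulrDr coefD !coef_part_gen_Xn.
Qed.

Section ThetaCoefficients.
Variable R : comNzRingType.
Implicit Types a b n s t : nat.

Lemma sum_sign_indicator_hit (f : nat -> nat) M n s :
  injective f -> (s < M)%N -> f s = n ->
  \sum_(t < M) (-1) ^+ t.+1 * (n == f t)%:R = (-1) ^+ s.+1 :> R.
Proof.
move=> f_inj lt_sM <-; rewrite (bigD1 (Ordinal lt_sM)) //= eqxx mulr1 big1 ?addr0 //.
move=> t /eqP neq_ts; rewrite eq_sym (_ : (f t == f s) = false) ?mulr0 //.
by apply/negbTE/eqP => /f_inj eq_ts; apply/neq_ts/val_inj.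
Qed.

Lemma sum_sign_indicator_miss (f : nat -> nat) M n :
  (forall t, (t < M)%N -> f t != n) ->
  \sum_(t < M) (-1) ^+ t.+1 * (n == f t)%:R = 0 :> R.
Proof.
by move=> f_miss; rewrite big1 // => t _; rewrite eq_sym (negbTE (f_miss t _)) ?mulr0.
Qed.

Lemma coef_theta a b M n : (theta a b M)`_n = (n == 0)%:R +
  (\sum_(t < M) (-1) ^+ t.+1 * (n == jtp_exp_pos a b t.+1)%:R +
   \sum_(t < M) (-1) ^+ t.+1 * (n == jtp_exp_neg a b t.+1)%:R) :> R.
Proof.
rewrite /theta coefD coef1 coef_sum -big_split /=; congr (_ + _).
by apply: eq_bigr => t _; rewrite coef_sign coefD !coefXn mulrDr.
Qed.

Lemma coef_theta_jtp_exp a b n j : (0 < b)%N -> (b < a)%N -> a != (2 * b)%N ->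
  n = jtp_exp a b j -> (theta a b n.+1)`_n = (-1) ^+ `|j|%N :> R.
Proof.
move=> b_gt0 lt_ba neq_a2b; rewrite coef_theta.
have exp_inj := jtp_exp_inj b_gt0 lt_ba neq_a2b.
have pos_inj : injective (fun t => jtp_exp_pos a b t.+1).
  by move=> t t' /(exp_inj (Posz t.+1) (Posz t'.+1)) [].
have neg_inj : injective (fun t => jtp_exp_neg a b t.+1).
  by move=> t t' /(exp_inj (Negz t) (Negz t')) [].
have pos_neq_neg s t : jtp_exp_pos a b s != jtp_exp_neg a b t.+1.
  by apply/eqP => /(exp_inj (Posz s) (Negz t)).
have pos_gt0 t : (0 < jtp_exp_pos a b t.+1)%N.
  exact: leq_trans (jtp_exp_pos_ge a t.+1 b_gt0).
have neg_gt0 t : (0 < jtp_exp_neg a b t.+1)%N.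
  exact: leq_trans (jtp_exp_neg_ge t.+1 lt_ba).
case: j => [[|s]|s] /= ->.
- have -> : jtp_exp_pos a b 0 = 0%N by rewrite /jtp_exp_pos !muln0.
  rewrite eqxx (@sum_sign_indicator_miss (fun t => jtp_exp_pos a b t.+1)); last first.
    by move=> t _; rewrite -lt0n.
  rewrite (@sum_sign_indicator_miss (fun t => jtp_exp_neg a b t.+1)) ?addr0 //.
  by move=> t _; rewrite -lt0n.
- rewrite (sum_sign_indicator_hit pos_inj (leqW (jtp_exp_pos_ge a s.+1 b_gt0))) //.
  rewrite (@sum_sign_indicator_miss (fun t => jtp_exp_neg a b t.+1)); last first.
    by move=> t _; rewrite eq_sym pos_neq_neg.
  by rewrite (gtn_eqF (pos_gt0 s)) add0r addr0.
- rewrite (sum_sign_indicator_hit neg_inj (leqW (jtp_exp_neg_ge s.+1 lt_ba))) //.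
  rewrite (@sum_sign_indicator_miss (fun t => jtp_exp_pos a b t.+1)); last first.
    by move=> t _; apply: pos_neq_neg.
  by rewrite (gtn_eqF (neg_gt0 s)) !add0r.
Qed.

Lemma coef_theta_miss a b n :
  (forall j, n <> jtp_exp a b j) -> (theta a b n.+1)`_n = 0 :> R.
Proof.
move=> n_miss; rewrite coef_theta.
rewrite (@sum_sign_indicator_miss (fun t => jtp_exp_pos a b t.+1)); last first.
  by move=> t _; apply/eqP => eq_n; apply: (n_miss (Posz t.+1)).
rewrite (@sum_sign_indicator_miss (fun t => jtp_exp_neg a b t.+1)); last first.
  by move=> t _; apply/eqP => eq_n; apply: (n_miss (Negz t)).
suff /negbTE -> : n != 0%N by rewrite !addr0.
by apply/eqP => n0; apply: (n_miss 0); rewrite n0 /= /jtp_exp_pos !muln0.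
Qed.

End ThetaCoefficients.

Lemma divz_jtp_exp a b j x : (b <= a)%N ->
  x = j * (a%:Z * j - a%:Z + 2 * b%:Z) -> (x %/ 2)%Z = (jtp_exp a b j)%:Z.
Proof. by move=> le_ba ->; rewrite -jtp_exp_double // mulKz. Qed.

Lemma hept_jtp_exp j : hept j = (jtp_exp 5 1 j)%:Z.
Proof. by apply: divz_jtp_exp => //; lia. Qed.

Lemma pent_jtp_exp j : 5 * pent j = (jtp_exp 15 5 j)%:Z.
Proof.
rewrite /pent (@divz_jtp_exp 3 1 j) //; last lia.
have := @jtp_exp_double 3 1 j isT; have := @jtp_exp_double 15 5 j isT.
lia.
Qed.

Lemma part_gen_theta51_coef n :
  pR1 n%:Z + \sum_(1 <= j < n.+2)
      (-1) ^+ j * (pR1 (n%:Z - ((j%:Z * (5 * j%:Z - 3)) %/ 2)%Z)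
                   + pR1 (n%:Z - ((j%:Z * (5 * j%:Z + 3)) %/ 2)%Z))
  = (theta 15 5 n.+1)`_n.
Proof.
rewrite -(eqmodX_coef (part_gen_theta51 n) (leqnn n)) coef_part_gen_theta.
rewrite big_add1 big_mkord; congr (_ + _); apply: eq_bigr => t _.
rewrite (@divz_jtp_exp 5 1 t.+1) ?(@divz_jtp_exp 5 1 (Negz t)) //.
  by rewrite NegzE; lia.
lia.
Qed.

Lemma part_gen_theta31_coef n :
  pR2 n%:Z + \sum_(1 <= j < n.+2)
      (-1) ^+ j * (pR2 (n%:Z - ((j%:Z * (3 * j%:Z - 1)) %/ 2)%Z)
                   + pR2 (n%:Z - ((j%:Z * (3 * j%:Z + 1)) %/ 2)%Z))
  = (theta 5 1 n.+1)`_n.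
Proof.
rewrite -(eqmodX_coef (part_gen_theta31 n) (leqnn n)) coef_part_gen_theta.
rewrite big_add1 big_mkord; congr (_ + _); apply: eq_bigr => t _.
rewrite (@divz_jtp_exp 3 1 t.+1) ?(@divz_jtp_exp 3 1 (Negz t)) //.
  by rewrite NegzE; lia.
lia.
Qed.

Lemma coef_theta_cases a b n (e : int -> int) (L : int) :
  (0 < b)%N -> (b < a)%N -> a != (2 * b)%N ->
  (forall j, e j = (jtp_exp a b j)%:Z) -> L = (theta a b n.+1)`_n ->
  [/\ (forall j : int, (2 %| j)%Z -> n%:Z = e j -> L = 1),
      (forall j : int, ~~ (2 %| j)%Z -> n%:Z = e j -> L = -1) &
      ((forall j : int, n%:Z <> e j) -> L = 0)].
Proof.
move=> b_gt0 lt_ba neq_a2b eE ->.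
have coef_hit j : n%:Z = e j -> (theta a b n.+1)`_n = (-1) ^+ ~~ (2 %| j)%Z.
  rewrite eE => /eqP; rewrite eqz_nat => /eqP n_eq.
  rewrite (coef_theta_jtp_exp _ b_gt0 lt_ba neq_a2b n_eq).
  by rewrite -signr_odd dvdzE dvdn2 negbK.
split=> [j even_j /coef_hit -> | j odd_j /coef_hit -> | n_miss].
- by rewrite even_j.
- by rewrite (negbTE odd_j).
by apply: coef_theta_miss => j n_eq; apply: (n_miss j); rewrite eE n_eq.
Qed.

Theorem corollary1 (n : nat) :
  (let L1 := pR1 n%:Z + \sum_(1 <= j < n.+2)
        (-1) ^+ j * (pR1 (n%:Z - ((j%:Z * (5 * j%:Z - 3)) %/ 2)%Z)
                     + pR1 (n%:Z - ((j%:Z * (5 * j%:Z + 3)) %/ 2)%Z)) in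
   [/\ (forall j : int, (2 %| j)%Z -> n%:Z = 5 * pent j -> L1 = 1),
       (forall j : int, ~~ (2 %| j)%Z -> n%:Z = 5 * pent j -> L1 = -1) &
       ((forall j : int, n%:Z <> 5 * pent j) -> L1 = 0)])
  /\
  (let L2 := pR2 n%:Z + \sum_(1 <= j < n.+2)
        (-1) ^+ j * (pR2 (n%:Z - ((j%:Z * (3 * j%:Z - 1)) %/ 2)%Z)
                     + pR2 (n%:Z - ((j%:Z * (3 * j%:Z + 1)) %/ 2)%Z)) in
   [/\ (forall j : int, (2 %| j)%Z -> n%:Z = hept j -> L2 = 1),
       (forall j : int, ~~ (2 %| j)%Z -> n%:Z = hept j -> L2 = -1) &
       ((forall j : int, n%:Z <> hept j) -> L2 = 0)]).
Proof.
split.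
- exact: (@coef_theta_cases 15 5 n (fun j => 5 * pent j) _ isT isT isT
           pent_jtp_exp (part_gen_theta51_coef n)).
- exact: (@coef_theta_cases 5 1 n hept _ isT isT isT
           hept_jtp_exp (part_gen_theta31_coef n)).
Qed.
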